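(* For all integers $0\le k\le n$, $A_{k,n}(q)=\sum_{i=0}^{n}\binom{n}{i}E_{k,n-i}(q)$.
   Context: Place $1,\dots,n$ clockwise on a circle. Distinct $p_1,\dots,p_m\in\{1,\dots,n\}$ are in clockwise cyclic order if $(p_2-p_1)\bmod n<(p_3-p_1)\bmod n<\dots<(p_m-p_1)\bmod n$ (residues in $\{0,\dots,n-1\}$). A decorated permutation of $[n]$ is a permutation $\pi\in S_n$ together with a coloring of each fixed point as ''clockwise'' or ''counterclockwise''. An ordered pair $(i,j)$, $i\ne j$, is aligned if the entries of $(i,\pi(i),\pi(j),j)$ are pairwise distinct except that possibly $i=\pi(i)$ and/or $j=\pi(j)$, the distinct entries in this order are in clockwise cyclic order, $i$ is colored counterclockwise if $\pi(i)=i$, and $j$ is colored clockwise if $\pi(j)=j$. An alignment is an unordered pair $\{i,j\}$ such that $(i,j)$ or $(j,i)$ is aligned; $\mathrm{al}(\pi)$ is the number of alignments. $K(\pi)=\#\{i:\pi(i)>i\}+\#\{\text{fixed points colored counterclockwise}\}$. Define $A_{k,n}(q)=\sum q^{k(n-k)-\mathrm{al}(\pi)}$ over decorated permutations $\pi$ of $[n]$ with $K(\pi)=k$ (by Postnikov's theorem this is the generating function of the cells of the totally nonnegative Grassmannian $Gr^+_{k,n}$ by dimension). An ordinary permutation $\pi\in S_m$ is regarded as the decorated permutation with all fixed points colored counterclockwise; $i$ is a weak excedence of $\pi$ if $\pi(i)\ge i$. For $m\ge0$, $E_{k,m}(q)=\sum q^{k(m-k)-\mathrm{al}(\pi)}$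 over $\pi\in S_m$ with exactly $k$ weak excedences (an empty sum, hence $0$, if there are none). *)

From HB Require Import structures.
From mathcomp Require Import all_boot all_order all_algebra all_fingroup.
Set Implicit Arguments. Unset Strict Implicit. Unset Printing Implicit Defensive.
Import Order.TTheory GRing.Theory Num.Theory.

(* The points 1..n of the circle are represented by 'I_n (value i stands for
   point i+1); cyclic order only depends on differences mod n, so this shift
   is harmless. *)

(* A duplicate-free list s = [:: p1; ...; pm] of residues < n is in clockwise
   cyclic order iff (p2-p1) mod n < ... < (pm-p1) mod n. *)
Definition cyc_ordered (n : nat) (s : seq nat) : bool :=
  match s with
  | [::] => true
  | p :: _ => sorted ltn [seq (x + n - p) %% n | x <- s]
  end.

(* A decorated permutation is a pair (pi, C) where C is the set of fixed
   points of pi colored counterclockwise (C must be a subset of the fixed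
   points); the other fixed points are colored clockwise. *)
Definition fixpts (n : nat) (pi : {perm 'I_n}) : {set 'I_n} :=
  [set i | pi i == i].

Definition aligned (n : nat) (pi : {perm 'I_n}) (C : {set 'I_n}) (i j : 'I_n)
  : bool :=
  [&& i != j, i != pi j, pi i != j, pi i != pi j,
      cyc_ordered n (undup [:: val i; val (pi i); val (pi j); val j]),
      (pi i == i) ==> (i \in C) &
      (pi j == j) ==> (j \notin C)].

Definition al (n : nat) (pi : {perm 'I_n}) (C : {set 'I_n}) : nat :=
  #|[set p : 'I_n * 'I_n | (val p.1 < val p.2)%N &&
        (aligned pi C p.1 p.2 || aligned pi C p.2 p.1)]|.

Definition Kstat (n : nat) (pi : {perm 'I_n}) (C : {set 'I_n}) : nat :=
  (#|[set i : 'I_n | val i < val (pi i)]| + #|C|)%N.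

Local Open Scope ring_scope.

(* A_{k,n}(q), evaluated at a unit q of a commutative ring (integer exponents). *)
Definition Apoly (R : comUnitRingType) (k n : nat) (q : R) : R :=
  \sum_(pi : {perm 'I_n})
    \sum_(C : {set 'I_n} | (C \subset fixpts pi) && (Kstat pi C == k))
       q ^ ((k * (n - k))%N%:Z - (al pi C)%:Z).

Definition wexc (m : nat) (pi : {perm 'I_m}) : nat :=
  #|[set i : 'I_m | (val i <= val (pi i))%N]|.

(* E_{k,m}(q): ordinary permutations = all fixed points counterclockwise *)
Definition Epoly (R : comUnitRingType) (k m : nat) (q : R) : R :=
  \sum_(pi : {perm 'I_m} | wexc pi == k)
     q ^ ((k * (m - k))%N%:Z - (al pi (fixpts pi))%:Z).

From HB Require Import structures.
From mathcomp Require Import all_boot all_order all_algebra all_fingroup.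
From mathcomp Require Import zify.
Import Order.TTheory GRing.Theory Num.Theory.

Set Implicit Arguments.
Unset Strict Implicit.
Unset Printing Implicit Defensive.

(* Group the decorated permutations by the set D of their fixed points
   coloured clockwise.  Deleting one such point j and closing up the circle is
   a bijection onto the decorated permutations of [n-1] with clockwise set
   D - j; it preserves K and the alignments not involving j.  As j is
   clockwise, the alignments involving j are the aligned pairs (i, j): the
   counterclockwise fixed points i and the arcs i -> pi(i) that do not pass
   over j.  Their number is K, corrected by the arcs passing over j upwards
   minus those passing over it downwards, and these two numbers agree because
   pi is a bijection.  So deleting j removes exactly k alignments, as many as
   k(n-k) loses, and the weight is unchanged: by induction the permutations
   with clockwise set D contribute E_{k,n-|D|}, and there are binomial(n, i)
   sets D of size i. *)

Lemma bumpE h i : bump h i = if h <= i then i.+1 else i.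
Proof. by rewrite /bump; case: leqP. Qed.

Lemma ltn_bump2 h i i' : (bump h i < bump h i') = (i < i').
Proof. by rewrite !ltnNge leq_bump2. Qed.

Lemma ltn_bumpl h i : (bump h i < h) = (i < h).
Proof. by rewrite bumpE; case: (leqP h i) => hi; apply/idP/idP; lia. Qed.

Lemma ltn_bumpr h i : (h < bump h i) = (h <= i).
Proof. by rewrite bumpE; case: (leqP h i) => hi; apply/idP/idP; lia. Qed.

Lemma modn_shift x p N : x < N -> p < N ->
  (x + N - p) %% N = if p <= x then x - p else x + N - p.
Proof.
move=> xN pN; case: leqP => px; last by rewrite modn_small //; lia.
by rewrite -addnBAC // modnDr modn_small //; lia.
Qed.

Lemma ltn_modn_shift x y p N : x < N -> y < N -> p < N ->
  ((x + N - p) %% N < (y + N - p) %% N) =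
    if p <= x then (y < p) || (x < y) else (y < p) && (x < y).
Proof.
move=> xN yN pN; rewrite !modn_shift //.
by case: (leqP p x) => px; case: (leqP p y) => py; apply/idP/idP; lia.
Qed.

Lemma cyc_orderedE n p s :
  cyc_ordered n (p :: s) = sorted ltn [seq (x + n - p) %% n | x <- p :: s].
Proof. by []. Qed.

Lemma cyc_ordered_mono (f : nat -> nat) n n' (s : seq nat) :
  {in gtn n &, {mono f : x y / x <= y}} -> {in gtn n, forall x, f x < n'} ->
  all (gtn n) s -> cyc_ordered n' (map f s) = cyc_ordered n s.
Proof.
move=> fmono fn; case: s => [//|p t] st; have pn : p < n by case/andP: st.
rewrite map_cons !cyc_orderedE -map_cons -map_comp !sorted_map.
apply: (eq_in_sorted (P := gtn n)); last exact: st.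
move=> x y xn yn /=.
rewrite (ltn_modn_shift (fn x xn) (fn y yn) (fn p pn)) (ltn_modn_shift xn yn pn).
have fmono_lt := leqW_mono_in fmono.
by rewrite (fmono _ _ pn xn) (fmono_lt _ _ yn pn) (fmono_lt _ _ xn yn).
Qed.

Lemma cyc_ordered2 n a b : a < n -> b < n -> a != b -> cyc_ordered n [:: a; b].
Proof.
move=> an bn ab; rewrite cyc_orderedE /= andbT ltn_modn_shift // leqnn.
by rewrite -neq_ltn eq_sym.
Qed.

Lemma cyc_ordered3 n a b c : a < n -> b < n -> c < n ->
  a != b -> b != c -> a != c ->
  cyc_ordered n [:: a; b; c] = [|| a < b < c, b < c < a | c < a < b].
Proof.
move=> an bn cn ab bc ac; rewrite cyc_orderedE /= andbT !ltn_modn_shift // leqnn.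
by case: (leqP a b) => ?; apply/idP/idP; lia.
Qed.

Lemma undup_aacc (T : eqType) (a c : T) : a != c -> undup [:: a; a; c; c] = [:: a; c].
Proof. by move=> ac; rewrite /= !inE !eqxx (negbTE ac). Qed.

Lemma undup_abcc (T : eqType) (a b c : T) : a != b -> a != c -> b != c ->
  undup [:: a; b; c; c] = [:: a; b; c].
Proof. by move=> ab ac bc; rewrite /= !inE !eqxx (negbTE ab) (negbTE ac) (negbTE bc). Qed.

Lemma lift_eqF m (j : 'I_m.+1) x : (lift j x == j) = false.
Proof. by apply/negbTE; rewrite eq_sym neq_lift. Qed.

Lemma mem_lift_imset m (j : 'I_m.+1) (A : {set 'I_m}) y :
  (lift j y \in lift j @: A) = (y \in A).
Proof. exact: (mem_imset _ _ (@lift_inj _ j)). Qed.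

Lemma notin_lift_imset m (j : 'I_m.+1) (A : {set 'I_m}) : (j \in lift j @: A) = false.
Proof. by apply/negbTE/imsetP => -[x _ /eqP]; rewrite (negbTE (neq_lift _ _)). Qed.

Lemma card_sum_indicator (T : finType) (A : {pred T}) : #|A| = \sum_x (x \in A : nat).
Proof. by rewrite -sum1_card big_mkcond; apply: eq_bigr => x _; case: (x \in A). Qed.

Lemma sum_pairs_lift m (j : 'I_m.+1) (F : 'I_m.+1 -> 'I_m.+1 -> nat) :
  \sum_a \sum_b F a b = F j j + \sum_x (F j (lift j x) + F (lift j x) j)
                        + \sum_x \sum_y F (lift j x) (lift j y).
Proof.
rewrite (bigD1_ord j) //= (bigD1_ord j) //=.
under [X in _ + X = _]eq_bigr do rewrite (bigD1_ord j) //=.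
by rewrite !big_split /= !addnA.
Qed.

Lemma perm_crossings m (j : nat) (s : {perm 'I_m}) :
  \sum_(x : 'I_m) (x < j <= s x) = \sum_(x : 'I_m) (s x < j <= x).
Proof.
pose both := \sum_(x : 'I_m) ((x < j) && (s x < j)).
have up : \sum_(x : 'I_m) (x < j) = \sum_(x : 'I_m) (x < j <= s x) + both.
  rewrite /both -big_split; apply: eq_bigr => x _ /=.
  by rewrite [j <= _]leqNgt; case: (x < j); case: (s x < j).
have down : \sum_(x : 'I_m) (s x < j) = \sum_(x : 'I_m) (s x < j <= x) + both.
  rewrite /both -big_split; apply: eq_bigr => x _ /=.
  by rewrite [j <= _]leqNgt; case: (x < j); case: (s x < j).
have : \sum_(x : 'I_m) (x < j) = \sum_(x : 'I_m) (s x < j).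
  exact: (reindex_inj (@perm_inj _ s)).
lia.
Qed.

Definition alignment n (pi : {perm 'I_n}) (C : {set 'I_n}) (a b : 'I_n) : nat :=
  (a < b) && (aligned pi C a b || aligned pi C b a).

Lemma al_sum n (pi : {perm 'I_n}) (C : {set 'I_n}) :
  al pi C = \sum_a \sum_b alignment pi C a b.
Proof. by rewrite /al card_sum_indicator pair_bigA; apply: eq_bigr => -[a b] _; rewrite inE. Qed.

Lemma Kstat_sum n (pi : {perm 'I_n}) (C : {set 'I_n}) :
  Kstat pi C = \sum_(x : 'I_n) (x < pi x) + \sum_x (x \in C).
Proof.
rewrite /Kstat !card_sum_indicator; congr (_ + _).
by apply: eq_bigr => x _; rewrite inE.
Qed.

Lemma Kstat_fixpts n (pi : {perm 'I_n}) : Kstat pi (fixpts pi) = wexc pi.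
Proof.
rewrite Kstat_sum /wexc card_sum_indicator -big_split; apply: eq_bigr => x _ /=.
by rewrite !inE -(inj_eq val_inj) /=; case: ltngtP.
Qed.

Lemma Kstat_le n (pi : {perm 'I_n}) (C : {set 'I_n}) : C \subset fixpts pi -> Kstat pi C <= n.
Proof.
move=> CF; rewrite Kstat_sum -big_split.
apply: (@leq_trans (\sum_(x : 'I_n) 1)); last by rewrite sum1_card card_ord.
apply: leq_sum => x _; case: (boolP (x \in C)) => [xC | _]; last by case: (_ < _).
by move: (subsetP CF x xC); rewrite inE => /eqP ->; rewrite ltnn.
Qed.

Section LiftFixedPoint.
Variables (m : nat) (j : 'I_m.+1) (s : {perm 'I_m}) (C : {set 'I_m}).
Hypothesis CF : C \subset fixpts s.
Local Notation p := (lift_perm j j s).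
Local Notation C' := (lift j @: C).

Lemma fixpts_lift_perm : fixpts p = j |: (lift j @: fixpts s).
Proof.
apply/setP => x; rewrite !inE; case: (unliftP j x) => [y ->|->].
  by rewrite lift_perm_lift (inj_eq lift_inj) lift_eqF mem_lift_imset inE.
by rewrite lift_perm_id !eqxx.
Qed.

Lemma aligned_lift_perm a b : aligned p C' (lift j a) (lift j b) = aligned s C a b.
Proof.
rewrite /aligned !lift_perm_lift !(inj_eq lift_inj) !mem_lift_imset.
have -> : [:: val (lift j a); val (lift j (s a)); val (lift j (s b)); val (lift j b)]
   = map (bump j) [:: val a; val (s a); val (s b); val b] by [].
rewrite undup_map_inj; last exact: (can_inj (bumpK j)).
rewrite (@cyc_ordered_mono _ m) ?all_undup //=.
- by move=> y z _ _; apply: leq_bump2.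
- move=> y ym; have {}ym : y < m := ym.
  by rewrite bumpE; case: ifP => _; lia.
- by rewrite !ltn_ord.
Qed.

Lemma aligned_lift_perm_fixl x : aligned p C' j (lift j x) = false.
Proof. by rewrite /aligned lift_perm_id eqxx notin_lift_imset /= !andbF. Qed.

Lemma aligned_lift_perm_fixr (x : 'I_m) :
  aligned p C' (lift j x) j + (x < j <= s x) = (x < s x) + (x \in C) + (s x < j <= x).
Proof.
rewrite /aligned lift_perm_id lift_perm_lift !(inj_eq lift_inj) mem_lift_imset.
rewrite notin_lift_imset !lift_eqF eqxx.
have bx : bump j x < m.+1 := ltn_ord (lift j x).
have bsx : bump j (s x) < m.+1 := ltn_ord (lift j (s x)).
have jm := ltn_ord j.
have bj y : bump j y != j by rewrite eq_sym neq_bump.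
case: (eqVneq (s x) x) => [-> | sxx].
  by rewrite undup_aacc ?bj // cyc_ordered2 ?bj // ltnn /= andbT.
have xC : (x \in C) = false by apply: contraNF sxx => /(subsetP CF); rewrite inE.
have bxsx : bump j x != bump j (s x).
  by rewrite (inj_eq (can_inj (bumpK j))) eq_sym.
rewrite undup_abcc ?bj // cyc_ordered3 ?bj // xC /= andbT.
rewrite !ltn_bump2 !ltn_bumpl !ltn_bumpr.
have {}sxx : val (s x) != val x by [].
lia.
Qed.

Lemma Kstat_lift_perm : Kstat p C' = Kstat s C.
Proof.
rewrite !Kstat_sum (bigD1_ord j) //= lift_perm_id ltnn (bigD1_ord j) //= notin_lift_imset.
congr (_ + _); apply: eq_bigr => x _; first by rewrite lift_perm_lift ltn_bump2.
by rewrite mem_lift_imset.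
Qed.

Lemma sum_aligned_lift_perm_fix : \sum_x aligned p C' (lift j x) j = Kstat s C.
Proof.
apply/eqP; rewrite -(eqn_add2r (\sum_(x : 'I_m) (x < j <= s x))) -big_split /=.
under eq_bigr do rewrite aligned_lift_perm_fixr.
by rewrite perm_crossings Kstat_sum -!big_split.
Qed.

Lemma al_lift_perm : al p C' = al s C + Kstat s C.
Proof.
rewrite !al_sum (sum_pairs_lift j (alignment p C')) {1}/alignment ltnn add0n addnC.
congr (_ + _).
  apply: eq_bigr => x _; apply: eq_bigr => y _.
  by rewrite /alignment !aligned_lift_perm /= ltn_bump2.
rewrite -sum_aligned_lift_perm_fix; apply: eq_bigr => x _.
rewrite /alignment aligned_lift_perm_fixl /= ltn_bumpr ltn_bumpl.
by case: (aligned _ _ _ _); rewrite ?andbF //= !andbT; case: leqP.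
Qed.

End LiftFixedPoint.

Lemma lift_perm_inj m (j : 'I_m.+1) : injective (@lift_perm m j j).
Proof.
move=> s t st; apply/permP => x; apply: (@lift_inj _ j).
by rewrite -(lift_perm_lift j j s) -(lift_perm_lift j j t) st.
Qed.

Local Open Scope ring_scope.

Lemma sum_perm_fix (R : nmodType) m (j : 'I_m.+1) (G : {perm 'I_m.+1} -> R) :
  \sum_(pi : {perm 'I_m.+1} | pi j == j) G pi = \sum_(s : {perm 'I_m}) G (lift_perm j j s).
Proof.
rewrite -[RHS](big_imset _ (in2W (@lift_perm_inj m j))) /=; apply: eq_bigl => pi.
apply/eqP/imsetP => [pij | [s _ ->]]; last exact: lift_perm_id.
pose f x := odflt x (unlift j (pi (lift j x))).
have liftf x : lift j (f x) = pi (lift j x).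
  rewrite /f; case: unliftP => [y -> // | pij'].
  by move: (lift_eqF j x); rewrite -(inj_eq (@perm_inj _ pi)) pij' pij eqxx.
have f_inj : injective f.
  by move=> x y /(congr1 (lift j)); rewrite !liftf => /perm_inj/lift_inj.
exists (perm f_inj) => //; apply/permP => x; case: (unliftP j x) => [y ->|->].
  by rewrite lift_perm_lift permE liftf.
by rewrite lift_perm_id.
Qed.

Lemma big_subset_setD (R : nmodType) (T : finType) (F : {set T}) (G : {set T} -> R) :
  \sum_(C : {set T} | C \subset F) G C = \sum_(D : {set T} | D \subset F) G (F :\: D).
Proof.
rewrite (reindex_onto (fun D => F :\: D) (fun C => F :\: C)) /=; last first.
  by move=> C CF; rewrite setDDr setDv set0U; apply/setIidPr.
apply: eq_bigl => D; rewrite subsetDl setDDr setDv set0U /=.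
by apply/eqP/idP => [<- | /setIidPr //]; apply: subsetIl.
Qed.

Lemma sum_set_card (R : nzSemiRingType) (T : finType) (F : nat -> R) :
  \sum_(A : {set T}) F #|A| = \sum_(i < #|T|.+1) 'C(#|T|, i)%:R * F i.
Proof.
have cardA (A : {set T}) : (#|A| < #|T|.+1)%N by rewrite ltnS max_card.
rewrite (partition_big (fun A : {set T} => inord #|A| : 'I_#|T|.+1) xpredT) //=.
apply: eq_bigr => i _; rewrite -card_draws mulr_natl -sumr_const.
apply: eq_big => [A | A /eqP <-]; last by rewrite inordK.
by rewrite inE -(inj_eq val_inj) /= inordK.
Qed.

Section ClockwiseFixedPoints.
Variables (R : comUnitRingType) (q : R) (k : nat).

Definition Acw n (D : {set 'I_n}) : R :=
  \sum_(pi : {perm 'I_n} | (D \subset fixpts pi) && (Kstat pi (fixpts pi :\: D) == k))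
     q ^ ((k * (n - k))%N%:Z - (al pi (fixpts pi :\: D))%:Z).

Lemma Apoly_sum_Acw n : Apoly k n q = \sum_(D : {set 'I_n}) Acw D.
Proof.
rewrite /Acw; under [RHS]eq_bigr do rewrite big_mkcond /=.
rewrite exchange_big /=; apply: eq_bigr => pi _.
by rewrite big_mkcondr (big_subset_setD (fixpts pi)) -big_mkcondr -big_mkcond.
Qed.

Lemma Acw_set0 n : Acw (set0 : {set 'I_n}) = Epoly k n q.
Proof. by apply: eq_big => [pi | pi _]; rewrite setD0 ?sub0set ?Kstat_fixpts. Qed.

Lemma Acw_lift m (j : 'I_m.+1) (D : {set 'I_m.+1}) :
  j \in D -> Acw D = Acw [set x | lift j x \in D].
Proof.
move=> jD; set D' := [set x | lift j x \in D].
have sub_fix s : (D \subset fixpts (lift_perm j j s)) = (D' \subset fixpts s).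
  rewrite fixpts_lift_perm; apply/subsetP/subsetP => sub x.
    by rewrite inE => /sub; rewrite !inE lift_eqF mem_lift_imset inE.
  case: (unliftP j x) => [y ->|->]; last by rewrite !inE eqxx.
  by move=> yD; rewrite !inE lift_eqF mem_lift_imset sub // inE.
have ccw_fix s : fixpts (lift_perm j j s) :\: D = lift j @: (fixpts s :\: D').
  rewrite fixpts_lift_perm; apply/setP => x.
  case: (unliftP j x) => [y ->|->]; last by rewrite in_setD jD notin_lift_imset.
  by rewrite !inE lift_eqF !mem_lift_imset !inE.
rewrite /Acw (eq_bigl (fun pi : {perm 'I_m.+1} => (pi j == j) &&
    ((D \subset fixpts pi) && (Kstat pi (fixpts pi :\: D) == k)))); last first.
  move=> pi; case: (boolP (D \subset _)) => [/subsetP/(_ j jD) | _]; last by rewrite andbF.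
  by rewrite inE => ->.
rewrite big_mkcondr sum_perm_fix [RHS]big_mkcond; apply: eq_bigr => s _ /=.
rewrite sub_fix ccw_fix Kstat_lift_perm al_lift_perm ?subsetDl //.
case: ifP => // /andP[_ /eqP Ks]; congr (q ^ _).
have km : (k <= m)%N by rewrite -Ks Kstat_le ?subsetDl.
rewrite Ks subSn // mulnS; lia.
Qed.

Lemma Acw_card n (D : {set 'I_n}) : Acw D = Epoly k (n - #|D|) q.
Proof.
elim: n D => [|m IH] D; case: (set_0Vmem D) => [-> | [j jD]];
  rewrite ?Acw_set0 ?cards0 ?subn0 //; first by have := ltn_ord j.
have DjE : D :\ j = lift j @: [set x | lift j x \in D].
  apply/setP => x; case: (unliftP j x) => [y ->|->].
    by rewrite mem_lift_imset !inE eq_sym neq_lift.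
  by rewrite notin_lift_imset !inE eqxx.
rewrite (Acw_lift jD) IH (cardsD1 j D) jD DjE card_imset //; exact: lift_inj.
Qed.

End ClockwiseFixedPoints.

Theorem mainTheorem8 (R : comUnitRingType) (q : R) (k n : nat) :
  q \is a GRing.unit -> (k <= n)%N ->
  Apoly k n q = \sum_(i < n.+1) ('C(n, i))%:R * Epoly k (n - i) q.
Proof.
move=> _ _; rewrite Apoly_sum_Acw.
under eq_bigr do rewrite Acw_card.
by rewrite (sum_set_card _ (fun i => Epoly k (n - i) q)) card_ord.
Qed.
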